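(* Let $q\ge2$ and $n>h\ge1$. For all integers $r\in\{0,1,\dots,h\}$ and $l\in\{r,\dots,q\}$, $$M_q(n,h)\le\frac{\binom{n+h-2r+q-1}{q-1}}{\binom lr\binom{q-1+h-2r}{h-r}}+\sum_{i=1}^{l-1}\binom qi\binom{n-1}{i-1}$$ (the right-hand side being interpreted as $+\infty$ if the denominator vanishes). In particular, taking $r=0,l=1$, $M_q(n,h)\le\binom{n+h+q-1}{q-1}\big/\binom{q-1+h}{h}$.
   Context: $\triangle_n^{q-1}=\{\mathbf x\in\mathbb Z^q:x_i\ge0,\sum_ix_i=n\}$, $d_1(\mathbf x,\mathbf y)=\frac12\sum_i|x_i-y_i|$. $M_q(n,h)$ is the largest size of a subset of $\triangle_n^{q-1}$ with pairwise $d_1$-distances $>h$ (equivalently, the largest multiset code of length $n$ over a $q$-ary alphabet correcting $h$ deletions). Convention: $\binom ab=0$ for integers $a<b$ with $a\ge0$. *)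

From HB Require Import structures.
From mathcomp Require Import all_boot all_order all_algebra.
Set Implicit Arguments. Unset Strict Implicit. Unset Printing Implicit Defensive.
Import Order.TTheory GRing.Theory Num.Theory.

(* Points: functions 'I_q -> {0..n}; the simplex triangle_n^{q-1} is the set of
   those whose coordinates sum to n (every simplex point has coordinates <= n). *)
Definition point (q n : nat) := {ffun 'I_q -> 'I_n.+1}.

Definition in_simplex (q n : nat) (x : point q n) : bool :=
  (\sum_(i < q) (x i : nat) == n)%N.

Definition d1 (q n : nat) (x y : point q n) : rat :=
  ((\sum_(i < q) `|(x i : nat) - (y i : nat)|)%N)%:R / 2%:R.

Definition is_code (q n h : nat) (C : {set point q n}) : bool :=
  [forall x in C, in_simplex x] &&
  [forall x in C, forall y in C, (x != y) ==> (h%:R < d1 x y)%R].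

Definition M (q n h : nat) : nat :=
  \max_(C : {set point q n} | is_code h C) #|C|.

From HB Require Import structures.
From mathcomp Require Import all_boot all_order all_algebra.
From mathcomp Require Import zify.
Import Order.TTheory GRing.Theory Num.Theory.

Set Implicit Arguments.
Unset Strict Implicit.
Unset Printing Implicit Defensive.

(* Split a code C into the codewords with fewer than l nonzero coordinates and
   the others.  Simplex points with exactly i nonzero coordinates number
   'C(q, i) * 'C(n - 1, i - 1), which bounds the first part.  Around every other
   codeword x put the set B(x) of points y of the simplex of level
   N = n + h - 2r with sum_i (x_i - y_i)^+ <= r.  Taking one unit from r of the
   (at least l) nonzero coordinates of x and spreading h - r units over the
   remaining q - r coordinates produces 'C(l, r) * 'C(q + h - 1 - 2r, h - r)
   distinct points of B(x).  A common point y of B(x) and B(x') would give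
   |x - x'|_1 <= |x - y|_1 + |y - x'|_1 <= 2h, so the sets B(x) are disjoint
   and together have at most 'C(N + q - 1, q - 1) points. *)

Definition coord_sum q m (x : {ffun 'I_q -> 'I_m.+1}) : nat := \sum_(i < q) (x i : nat).

Definition supp q m (x : {ffun 'I_q -> 'I_m.+1}) : {set 'I_q} :=
  [set i | (x i : nat) != 0].

Arguments coord_sum {q m} x.
Arguments supp {q m} x.

Lemma suppPn q m (x : {ffun 'I_q -> 'I_m.+1}) i : i \notin supp x -> (x i : nat) = 0.
Proof. by rewrite inE negbK => /eqP. Qed.

Lemma leq_term_sum (I : finType) (F : I -> nat) i : F i <= \sum_j F j.
Proof. by rewrite (bigD1 i) //= leq_addr. Qed.

Lemma sum_mem_card q (D : {set 'I_q}) : \sum_(j < q) (j \in D : nat) = #|D|.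
Proof. by rewrite -sum1_card [RHS]big_mkcond; apply: eq_bigr => j _; case: (j \in D). Qed.

Lemma sum_sub_mem q m (x : {ffun 'I_q -> 'I_m.+1}) (D : {set 'I_q}) :
  D \subset supp x -> \sum_(j < q) ((x j : nat) - (j \in D)) + #|D| = coord_sum x.
Proof.
move=> /subsetP sDx; rewrite -sum_mem_card -big_split; apply: eq_bigr => j _.
by case jD: (j \in D) => /=; [move: (sDx j jD); rewrite inE; lia | lia].
Qed.

(** * Weak compositions *)

Lemma card_tuples_sum m s :
  #|[set t : m.-tuple 'I_s.+1 | \sum_(i <- t) (i : nat) == s]| = 'C(m + s - 1, s).
Proof.
case: m => [|m]; last by rewrite card_ord_partitions -bin_sub; [congr 'C(_, _) | ]; lia.
case: s => [|s].
  apply: (@eq_card1 _ [tuple]) => t; rewrite [t]tuple0 in_set big_nil inE.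
  by apply/esym/eqP.
by rewrite bin_small; [apply: eq_card0 => t; rewrite [t]tuple0 inE big_nil | lia].
Qed.

Section CompositionsOn.

Variables (q s : nat) (D : {set 'I_q}).

Definition restrict_tuple (b : {ffun 'I_q -> 'I_s.+1}) : #|D|.-tuple 'I_s.+1 :=
  [tuple of map b (enum D)].

Definition extend_tuple (t : #|D|.-tuple 'I_s.+1) : {ffun 'I_q -> 'I_s.+1} :=
  [ffun i => if i \in D then nth ord0 t (index i (enum D)) else ord0].

Lemma supp_extend_tuple t : supp (extend_tuple t) \subset D.
Proof. by apply/subsetP => i; rewrite !inE ffunE; case: ifP. Qed.

Lemma extend_tupleK : cancel extend_tuple restrict_tuple.
Proof.
move=> t; apply: val_inj; apply: (@eq_from_nth _ ord0) => /= [|j].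
  by rewrite size_map size_tuple -cardE.
rewrite size_map => lt_j; have x0 : 'I_q by case: (enum D) lt_j.
rewrite (nth_map x0) // ffunE.
have -> : nth x0 (enum D) j \in D by rewrite -mem_enum mem_nth.
by rewrite index_uniq ?enum_uniq.
Qed.

Lemma restrict_tupleK b : supp b \subset D -> extend_tuple (restrict_tuple b) = b.
Proof.
move=> /subsetP sbD; apply/ffunP => i; rewrite ffunE.
case: ifP => iD; first by rewrite (nth_map i) ?nth_index ?index_mem ?mem_enum.
by apply: val_inj; rewrite /= suppPn //; apply: contraFN iD; apply: sbD.
Qed.

Lemma sum_restrict_tuple b :
  supp b \subset D -> \sum_(i <- restrict_tuple b) (i : nat) = coord_sum b.
Proof.
move=> /subsetP sbD; rewrite big_map big_enum /coord_sum [RHS](bigID (mem D)) /=.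
by rewrite [X in _ + X]big1 ?addn0 // => j jD; apply: suppPn; apply: contra jD; apply: sbD.
Qed.

Lemma card_compositions_on :
  #|[set b : {ffun 'I_q -> 'I_s.+1} | (supp b \subset D) && (coord_sum b == s)]|
  = 'C(#|D| + s - 1, s).
Proof.
rewrite -card_tuples_sum; set X := [set b | _].
have inj : {in X &, injective restrict_tuple}.
  move=> b1 b2; rewrite !inE => /andP[s1 _] /andP[s2 _] e.
  by rewrite -(restrict_tupleK s1) -(restrict_tupleK s2) e.
rewrite -(card_in_imset inj); apply: eq_card => t; rewrite inE.
apply/imsetP/idP => [[b] | st].
  by rewrite inE => /andP[sbD sb] ->; rewrite sum_restrict_tuple.
exists (extend_tuple t); last by rewrite extend_tupleK.
by rewrite inE supp_extend_tuple -sum_restrict_tuple ?supp_extend_tuple ?extend_tupleK.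
Qed.

End CompositionsOn.

Lemma card_simplex q N : 0 < q ->
  #|[set y : point q N | coord_sum y == N]| = 'C(N + q - 1, q - 1).
Proof.
move=> q_gt0.
have -> : [set y : point q N | coord_sum y == N]
        = [set y | (supp y \subset setT) && (coord_sum y == N)].
  by apply/setP => y; rewrite !inE subsetT.
rewrite card_compositions_on cardsT card_ord -bin_sub; first congr 'C(_, _); lia.
Qed.

(** * Points with few nonzero coordinates *)

Lemma card_simplex_supp q n (D : {set 'I_q}) : 0 < #|D| ->
  #|[set x : point q n | (coord_sum x == n) && (supp x == D)]| <= 'C(n - 1, #|D| - 1).
Proof.
move=> D_gt0; set X := [set x | _].
have [-> | [x1 Xx1]] := set_0Vmem X; first by rewrite cards0.
have XP x : x \in X -> coord_sum x = n /\ supp x = D.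
  by rewrite inE => /andP[/eqP ? /eqP ?].
have le_D_n : #|D| <= n.
  by have [s1 <-] := XP x1 Xx1; have := sum_sub_mem (subxx (supp x1)); lia.
have sumX x : x \in X -> \sum_(j < q) ((x j : nat) - (j \in D)) = n - #|D|.
  move=> /XP[sx sxD]; have := sum_sub_mem (subxx (supp x)); rewrite sx sxD.
  by move=> e; apply/eqP; rewrite -(eqn_add2r #|D|) subnK // e.
have memD x j : x \in X -> (j \in D) = ((x j : nat) != 0).
  by move=> /XP[_ <-]; rewrite inE.
pose lower (x : point q n) : {ffun 'I_q -> 'I_(n - #|D|).+1} :=
  [ffun j => inord ((x j : nat) - 1)].
have lowerE x j : x \in X -> (lower x j : nat) = (x j : nat) - (j \in D).
  move=> Xx; rewrite ffunE (memD x j Xx) inordK; first by case: (nat_of_ord (x j)).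
  have := leq_term_sum (fun j => (x j : nat) - (j \in D)) j.
  by rewrite sumX // (memD x j Xx); case: (nat_of_ord (x j)) => //= ?; rewrite subn1.
have lower_inj : {in X &, injective lower}.
  move=> x y Xx Xy e; apply/ffunP => j; apply: val_inj => /=.
  have := lowerE x j Xx; rewrite e lowerE //.
  move: (memD x j Xx) (memD y j Xy) => ->.
  by case: (nat_of_ord (x j)) => [|a]; case: (nat_of_ord (y j)) => [|b] //= eq_lower; lia.
rewrite -(card_in_imset lower_inj).
apply: (@leq_trans #|[set b : {ffun 'I_q -> 'I_(n - #|D|).+1} |
                      (supp b \subset D) && (coord_sum b == n - #|D|)]|).
  apply/subset_leq_card/subsetP => _ /imsetP[x Xx ->]; rewrite inE; apply/andP; split.
    by apply/subsetP => j; rewrite inE lowerE // (memD x j Xx); case: (nat_of_ord (x j)).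
  by rewrite /coord_sum (eq_bigr _ (fun j _ => lowerE x j Xx)) sumX.
rewrite card_compositions_on -bin_sub; last lia.
have -> : #|D| + (n - #|D|) - 1 = n - 1 by lia.
by have -> : n - 1 - (n - #|D|) = #|D| - 1 by lia.
Qed.

Lemma sum_sets_by_card q (G : nat -> nat) l :
  \sum_(D : {set 'I_q} | 0 < #|D| < l) G #|D| = \sum_(1 <= i < l) 'C(q, i) * G i.
Proof.
elim: l => [|l IHl].
  by rewrite big_geq // big_pred0 // => D; rewrite ltn0 andbF.
case: l IHl => [|l] IHl.
  by rewrite big_geq // big_pred0 // => D; case: #|D|.
rewrite big_nat_recr //= -IHl (bigID (fun D : {set 'I_q} => #|D| == l.+1)) /= addnC.
congr (_ + _); first by apply: eq_bigl => D; lia.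
rewrite (eq_bigl (fun D : {set 'I_q} => #|D| == l.+1)); last first.
  by move=> D; case: eqP => [->|_]; rewrite ?andbT ?andbF //= ltnSn.
rewrite (eq_bigr (fun _ => G l.+1)); last by move=> D /eqP ->.
by rewrite sum_nat_cond_const card_draws card_ord.
Qed.

Lemma card_simplex_small_supp q n l : 0 < n ->
  #|[set x : point q n | (coord_sum x == n) && (#|supp x| < l)]|
  <= \sum_(1 <= i < l) 'C(q, i) * 'C(n - 1, i - 1).
Proof.
move=> n_gt0.
rewrite -sum1dep_card (partition_big supp (fun D : {set 'I_q} => 0 < #|D| < l)) /=.
  rewrite -sum_sets_by_card; apply: leq_sum => D /andP[D_gt0 _].
  rewrite sum1dep_card; apply: leq_trans (card_simplex_supp n D_gt0).
  by apply/subset_leq_card/subsetP => x; rewrite !inE => /andP[/andP[-> _] ->].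
move=> x /andP[/eqP sx ->]; rewrite andbT card_gt0; apply: contraTneq n_gt0 => supp0.
suff: coord_sum x = 0 by rewrite sx => ->.
by apply: big1 => i _; apply: suppPn; rewrite supp0 inE.
Qed.

(** * Packing disjoint balls *)

Definition deficit q m m' (x : {ffun 'I_q -> 'I_m.+1}) (y : {ffun 'I_q -> 'I_m'.+1}) : nat :=
  \sum_(i < q) ((x i : nat) - (y i : nat)).

Arguments deficit {q m m'} x y.

Definition ball q n N r (x : point q n) : {set point q N} :=
  [set y | (coord_sum y == N) && (deficit x y <= r)].

Arguments ball {q n} N r x.

Lemma deficit_balance q m m' (x : {ffun 'I_q -> 'I_m.+1}) (y : {ffun 'I_q -> 'I_m'.+1}) :
  deficit y x + coord_sum x = deficit x y + coord_sum y.
Proof. by rewrite -!big_split; apply: eq_bigr => i _ /=; lia. Qed.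

Lemma sum_distn_deficit q m m' (x : {ffun 'I_q -> 'I_m.+1}) (y : {ffun 'I_q -> 'I_m'.+1}) :
  \sum_(i < q) `|(x i : nat) - (y i : nat)| = deficit x y + deficit y x.
Proof.
rewrite -big_split; apply: eq_bigr => i _ /=.
by case: (leqP (x i) (y i)) => [le_xy | /ltnW le_yx];
  [rewrite distnEr // (eqP le_xy) | rewrite distnEl // (eqP le_yx) addn0].
Qed.

Lemma sum_distn_le_common_ball q n N h r (x x' : point q n) (y : point q N) :
  coord_sum x = n -> coord_sum x' = n -> N + 2 * r = n + h ->
  y \in ball N r x -> y \in ball N r x' ->
  \sum_(i < q) `|(x i : nat) - (x' i : nat)| <= 2 * h.
Proof.
move=> sx sx' eN; rewrite !inE => /andP[/eqP sy dxy] /andP[_ dx'y].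
apply: (@leq_trans (\sum_(i < q) (`|(x i : nat) - (y i : nat)| + `|(y i : nat) - (x' i : nat)|))).
  by apply: leq_sum => i _; apply: leqD_dist.
rewrite big_split /= !sum_distn_deficit.
have := deficit_balance x y; have := deficit_balance x' y.
by rewrite sx sx' sy; lia.
Qed.

Section BallSize.

Variables (q n N h r : nat) (x : point q n).
Hypothesis le_rh : r <= h.

(* A move lowers by one r nonzero coordinates of x (the set p.1) and adds
   h - r units (the vector p.2) to the other coordinates. *)
Definition moves : {set {set 'I_q} * {ffun 'I_q -> 'I_(h - r).+1}} :=
  [set p : {set 'I_q} * {ffun 'I_q -> 'I_(h - r).+1} |
     ((p.1 \subset supp x) && (#|p.1| == r)) &&
     ((supp p.2 \subset ~: p.1) && (coord_sum p.2 == h - r))].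

Definition move_point (p : {set 'I_q} * {ffun 'I_q -> 'I_(h - r).+1}) : point q N :=
  [ffun i => inord ((x i : nat) - (i \in p.1) + (p.2 i : nat))].

Lemma card_moves : #|moves| = 'C(#|supp x|, r) * 'C(q + h - 1 - 2 * r, h - r).
Proof.
rewrite -sum1dep_card.
rewrite -(pair_big_dep (fun A : {set 'I_q} => (A \subset supp x) && (#|A| == r))
   (fun A b => (supp b \subset ~: A) && (coord_sum b == h - r)) (fun _ _ => 1)) /=.
rewrite -cards_draws -sum_nat_cond_const; apply: eq_bigr => A /andP[_ /eqP cardA].
rewrite sum1dep_card card_compositions_on.
by have := cardsC A; rewrite card_ord cardA => ?; congr 'C(_, _); lia.
Qed.

Lemma moves_removed p i : p \in moves -> i \in p.1 -> 0 < (x i : nat) /\ (p.2 i : nat) = 0.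
Proof.
rewrite inE => /andP[/andP[/subsetP sAx _] /andP[/subsetP sbA _]] iA; split.
  by move: (sAx i iA); rewrite inE lt0n.
by apply: suppPn; apply: contraL iA => /sbA; rewrite inE.
Qed.

Hypotheses (sx : coord_sum x = n) (eN : N + 2 * r = n + h).

Lemma sum_move p : p \in moves ->
  \sum_(i < q) ((x i : nat) - (i \in p.1) + (p.2 i : nat)) = N.
Proof.
rewrite inE big_split => /andP[/andP[sAx /eqP cardA] /andP[_ /eqP]] /=.
rewrite /coord_sum => ->; have := sum_sub_mem sAx; rewrite sx cardA.
(* [set] merges two convertible copies of the sum that lia would see as distinct atoms. *)
by set S := \sum_(j < q) _; lia.
Qed.

Lemma move_pointE p i : p \in moves ->
  (move_point p i : nat) = (x i : nat) - (i \in p.1) + (p.2 i : nat).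
Proof.
move=> mp; rewrite ffunE inordK // ltnS -(sum_move mp).
exact: (leq_term_sum (fun i => (x i : nat) - (i \in p.1) + (p.2 i : nat))).
Qed.

Lemma move_point_inj : {in moves &, injective move_point}.
Proof.
move=> [A1 b1] [A2 b2] m1 m2 e.
have E i : (x i : nat) - (i \in A1) + (b1 i : nat) = (x i : nat) - (i \in A2) + (b2 i : nat).
  by rewrite -(move_pointE i m1) -(move_pointE i m2) e.
have eA : A1 = A2.
  apply/setP => i; have := E i.
  case A1i: (i \in A1); case A2i: (i \in A2) => //=.
    by have /= [] := moves_removed m1 A1i; lia.
  by have /= [] := moves_removed m2 A2i; lia.
subst A2; congr (_, _); apply/ffunP => i; apply: val_inj.
exact: addnI (E i).
Qed.

Lemma move_point_ball p : p \in moves -> move_point p \in ball N r x.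
Proof.
move=> mp; rewrite inE /coord_sum (eq_bigr _ (fun i _ => move_pointE i mp)) sum_move //.
rewrite eqxx /deficit.
apply: (@leq_trans (\sum_(i < q) (i \in p.1 : nat))); last first.
  by rewrite sum_mem_card; move: mp; rewrite inE => /andP[/andP[_ /eqP ->] _].
apply: leq_sum => i _; rewrite move_pointE //.
case A_i: (i \in p.1); last by lia.
by have [] := moves_removed mp A_i; lia.
Qed.

Lemma leq_card_ball l : l <= #|supp x| ->
  'C(l, r) * 'C(q + h - 1 - 2 * r, h - r) <= #|ball N r x|.
Proof.
move=> le_l_supp.
have sub : move_point @: moves \subset ball N r x.
  by apply/subsetP => _ /imsetP[p mp ->]; apply: move_point_ball.
apply: leq_trans (subset_leq_card sub); rewrite (card_in_imset move_point_inj) card_moves.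
by rewrite leq_mul2r leq_bin2l ?orbT.
Qed.

End BallSize.

Lemma sum_card_disjoint_le (I T : finType) (P : {pred I}) (F : I -> {set T}) (B : {set T}) :
  {in P &, forall i j y, y \in F i -> y \in F j -> i = j} ->
  {in P, forall i, F i \subset B} ->
  \sum_(i in P) #|F i| <= #|B|.
Proof.
move=> Fdisj FB; rewrite -sum1_card.
under eq_bigr => i _ do rewrite -sum1_card big_mkcond /=.
rewrite exchange_big [X in _ <= X]big_mkcond /=; apply: leq_sum => y _.
rewrite -big_mkcondr sum1_card; case: ifP => [yB | yNB].
  apply/card_le1_eqP => i j /andP[Pi yi] /andP[Pj yj].
  exact: Fdisj Pj Pi _ yj yi.
apply: eq_leq; apply: eq_card0 => i; apply/andP => -[Pi yi].
by move: yNB; rewrite (subsetP (FB i Pi)).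
Qed.

Lemma is_code_sum_distn q n h (C : {set point q n}) x y :
  is_code h C -> x \in C -> y \in C -> x != y ->
  2 * h < \sum_(i < q) `|(x i : nat) - (y i : nat)|.
Proof.
move=> /andP[_ /forallP Cdist] xC yC neq_xy.
move: (Cdist x); rewrite xC => /forallP /(_ y); rewrite yC neq_xy /= /d1.
by rewrite ltr_pdivlMr ?ltr0n // -natrM ltr_nat mulnC.
Qed.

Lemma packing_bound q n N h r l (C : {set point q n}) :
  is_code h C -> r <= h -> N + 2 * r = n + h ->
  #|C :&: [set x | l <= #|supp x|]| * ('C(l, r) * 'C(q + h - 1 - 2 * r, h - r))
  <= #|[set y : point q N | coord_sum y == N]|.
Proof.
move=> codeC le_rh eN; set H := C :&: _.
have HP x : x \in H -> [/\ x \in C, coord_sum x = n & l <= #|supp x|].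
  rewrite !inE => /andP[xC le_l_supp]; split=> //.
  by case/andP: codeC => /forallP /(_ x); rewrite xC => /eqP.
rewrite -sum_nat_const.
apply: (@leq_trans (\sum_(x in H) #|ball N r x|)).
  by apply: leq_sum => x /HP[_ sx le_l_supp]; apply: leq_card_ball.
apply: sum_card_disjoint_le => [x x' Hx Hx' y yx yx' | x _].
  have [xC sx _] := HP x Hx; have [x'C sx' _] := HP x' Hx'.
  apply/eqP; apply: contraTT (sum_distn_le_common_ball sx sx' eN yx yx').
  by move=> neq; rewrite -ltnNge; exact: is_code_sum_distn codeC xC x'C neq.
by apply/subsetP => y; rewrite !inE => /andP[].
Qed.

Theorem mainTheorem18 (q n h r l : nat) :
  (2 <= q)%N -> (1 <= h)%N -> (h < n)%N ->
  (r <= h)%N -> (r <= l)%N -> (l <= q)%N ->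
  ('C(l, r) * 'C(q + h - 1 - 2 * r, h - r) != 0)%N ->
  ((M q n h)%:R <=
     ('C(n + h + q - 1 - 2 * r, q - 1))%:R
       / ('C(l, r) * 'C(q + h - 1 - 2 * r, h - r))%:R
     + (\sum_(1 <= i < l) 'C(q, i) * 'C(n - 1, i - 1))%:R :> rat)%R.
Proof.
move=> le2q _ lt_hn le_rh _ _ ball_gt0.
have eN : (n + h - 2 * r) + 2 * r = n + h by lia.
rewrite /M; apply: (big_ind (fun m : nat => (m%:R <= _ :> rat)%R)).
- by rewrite addr_ge0 ?divr_ge0 ?ler0n.
- by move=> a b Ha Hb; rewrite /maxn; case: ifP.
move=> C codeC; rewrite -(cardsID [set x | l <= #|supp x|] C) natrD.
apply: lerD.
  rewrite ler_pdivlMr ?ltr0n ?lt0n // -natrM ler_nat.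
  have -> : 'C(n + h + q - 1 - 2 * r, q - 1) = 'C((n + h - 2 * r) + q - 1, q - 1).
    by congr 'C(_, _); lia.
  rewrite -card_simplex; last lia.
  by apply: packing_bound; lia.
rewrite ler_nat; apply: leq_trans (card_simplex_small_supp q l _); last lia.
apply/subset_leq_card/subsetP => x; rewrite !inE => /andP[lt_supp_l xC].
case/andP: codeC => /forallP /(_ x); rewrite xC => sx _.
by rewrite ltnNge lt_supp_l andbT.
Qed.
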